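(* For every quantifier-free $\tau_0$-formula $\varphi$ and every variable $x$ there exists a quantifier-free $\tau_0$-formula $\psi$ such that $\exists x.\,\varphi$ is equivalent to $\psi$ over $\mathfrak{L}$.
   Context: $\mathfrak{L}$ is the structure with domain $\mathbb{Q}$ and signature $\tau_0=\{<,1\}\cup\{c\cdot\}_{c\in\mathbb{Q}}$, where $<$ is the usual strict order on $\mathbb{Q}$, $1$ is a constant symbol denoting $1$, and each $c\cdot$ is a unary function symbol denoting $x\mapsto cx$. *)

(* the structure L = (Q, <, 1, (c.)_{c in Q}) over mathcomp's rat. *)
From mathcomp Require Import all_boot all_order all_algebra.
Set Implicit Arguments. Unset Strict Implicit. Unset Printing Implicit Defensive.
Import Order.TTheory GRing.Theory Num.Theory.
Local Open Scope ring_scope.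

Inductive term : Type :=
| TVar : nat -> term
| TOne : term
| TScale : rat -> term -> term.

Inductive formula : Type :=
| FEq : term -> term -> formula
| FLt : term -> term -> formula
| FTrue : formula
| FFalse : formula
| FNot : formula -> formula
| FAnd : formula -> formula -> formula
| FOr : formula -> formula -> formula
| FImp : formula -> formula -> formula
| FEx : nat -> formula -> formula
| FAll : nat -> formula -> formula.

Fixpoint qf (f : formula) : bool :=
  match f with
  | FEq _ _ | FLt _ _ | FTrue | FFalse => true
  | FNot g => qf g
  | FAnd g h | FOr g h | FImp g h => qf g && qf h
  | FEx _ _ | FAll _ _ => false
  end.

Fixpoint teval (v : nat -> rat) (t : term) : rat :=
  match t with
  | TVar n => v n
  | TOne => 1
  | TScale c s => c * teval v s
  end.

Definition upd (v : nat -> rat) (x : nat) (a : rat) : nat -> rat :=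
  fun n => if n == x then a else v n.

Fixpoint holds (v : nat -> rat) (f : formula) : Prop :=
  match f with
  | FEq s t => teval v s = teval v t
  | FLt s t => teval v s < teval v t
  | FTrue => True
  | FFalse => False
  | FNot g => ~ holds v g
  | FAnd g h => holds v g /\ holds v h
  | FOr g h => holds v g \/ holds v h
  | FImp g h => holds v g -> holds v h
  | FEx x g => exists a : rat, holds (upd v x a) g
  | FAll x g => forall a : rat, holds (upd v x a) g
  end.

Fixpoint tvars (t : term) : seq nat :=
  match t with
  | TVar n => [:: n]
  | TOne => [::]
  | TScale _ s => tvars s
  end.

Fixpoint fv (f : formula) : seq nat :=
  match f with
  | FEq s t | FLt s t => tvars s ++ tvars t
  | FTrue | FFalse => [::]
  | FNot g => fv g
  | FAnd g h | FOr g h | FImp g h => fv g ++ fv h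
  | FEx x g | FAll x g => filter (fun n => n != x) (fv g)
  end.

(* Every tau_0-term denotes a rational multiple of a single variable or of 1,
   so, as a condition on x, each atom s = t or s < t reads a x = r or a x < r
   with a rational a and an x-free term r.  For a <> 0 its truth value can
   only change at the breakpoint r / a.  Hence if phi(x) holds for some x, it
   holds to the left of all breakpoints, at a breakpoint c, or on an interval
   just to the right of c.  Each of these test points -oo, c, c + eps can be
   substituted into the atoms symbolically, giving quantifier-free formulas in
   the remaining variables, and psi is their disjunction.  As tau_0 has no
   addition, midpoints of breakpoints are not expressible by terms, which is
   why the infinitesimal test points c + eps are used. *)

From HB Require Import structures.
From mathcomp Require Import all_boot all_order all_algebra lra.
Set Implicit Arguments.
Unset Strict Implicit.
Unset Printing Implicit Defensive.

Import Order.TTheory GRing.Theory Num.Theory.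
Local Open Scope ring_scope.

Lemma subset_notin_cons (T : eqType) (x : T) (l S : seq T) :
  x \notin l -> {subset l <= x :: S} -> {subset l <= S}.
Proof.
move=> xl lS n nl; have := lS n nl; rewrite inE => /orP[/eqP en|//].
by rewrite -en nl in xl.
Qed.

Lemma term_comparable : comparable term.
Proof. rewrite /comparable /decidable; decide equality; exact: eq_comparable. Qed.

HB.instance Definition _ := hasDecEq.Build term (compareP term_comparable).

Local Notation tzero := (TScale 0 TOne).

Fixpoint tcoef (t : term) : rat :=
  if t is TScale c s then c * tcoef s else 1.

Lemma teval_upd_notin v x y t :
  x \notin tvars t -> teval (upd v x y) t = teval v t.
Proof.
elim: t => [n||c s IH] //=; last by move/IH ->.
by rewrite inE /upd eq_sym => /negbTE ->.
Qed.

Lemma teval_upd_in v x y t : x \in tvars t -> teval (upd v x y) t = tcoef t * y.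
Proof.
elim: t => [n||c s IH] //=; last by move/IH ->; rewrite mulrA.
by rewrite inE /upd mul1r => /eqP ->; rewrite eqxx.
Qed.

Definition isolate x s t : option (rat * term) :=
  match x \in tvars s, x \in tvars t with
  | true, true => Some (tcoef s - tcoef t, tzero)
  | true, false => Some (tcoef s, t)
  | false, true => Some (- tcoef t, TScale (-1) s)
  | false, false => None
  end.

Variant isolate_spec x s t : option (rat * term) -> Prop :=
| IsolateNone of x \notin tvars s ++ tvars t : isolate_spec x s t None
| IsolateSome a r of x \notin tvars r & {subset tvars r <= tvars s ++ tvars t}
  & (forall v y, teval (upd v x y) s - teval (upd v x y) t = a * y - teval v r) :
    isolate_spec x s t (Some (a, r)).

Lemma isolateP x s t : isolate_spec x s t (isolate x s t).
Proof.
rewrite /isolate; case sx: (x \in tvars s); case tx: (x \in tvars t);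
  constructor; rewrite ?mem_cat ?sx ?tx //.
- by move=> v y; rewrite !teval_upd_in //= mul0r subr0 mulrBl.
- by move=> n hn; rewrite mem_cat hn orbT.
- by move=> v y; rewrite (teval_upd_in v y sx) teval_upd_notin ?tx.
- by move=> n /= hn; rewrite mem_cat hn.
- move=> v y; rewrite (teval_upd_in v y tx) teval_upd_notin ?sx //=.
  by rewrite mulN1r mulNr opprK addrC.
Qed.

Definition atom (strict : bool) s t := if strict then FLt s t else FEq s t.

Definition atom_rel {R : numDomainType} (strict : bool) (p q : R) : bool :=
  if strict then p < q else p == q.

Lemma atom_relB {R : numDomainType} b (p q p' q' : R) :
  p - q = p' - q' -> atom_rel b p q = atom_rel b p' q'.
Proof.
by case: b => /= e; [rewrite -subr_lt0 e subr_lt0 | rewrite -subr_eq0 e subr_eq0].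
Qed.

Definition fbool (B : bool) := if B then FTrue else FFalse.

Fixpoint qf_eval (v : nat -> rat) (f : formula) : bool :=
  match f with
  | FEq s t => teval v s == teval v t
  | FLt s t => teval v s < teval v t
  | FTrue => true
  | FFalse => false
  | FNot f1 => ~~ qf_eval v f1
  | FAnd f1 f2 => qf_eval v f1 && qf_eval v f2
  | FOr f1 f2 => qf_eval v f1 || qf_eval v f2
  | FImp f1 f2 => qf_eval v f1 ==> qf_eval v f2
  | FEx _ _ | FAll _ _ => false
  end.

Lemma qf_evalP v f : qf f -> reflect (holds v f) (qf_eval v f).
Proof.
elim: f => [s t|s t| | |f1 IH1|f1 IH1 f2 IH2|f1 IH1 f2 IH2|f1 IH1 f2 IH2|? ? ?|? ? ?] //=.
- by move=> _; apply: eqP.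
- by move=> _; apply: idP.
1,2: by move=> _; constructor.
- by move=> /IH1 [] h; constructor; tauto.
all: by case/andP => /IH1 [] h1 /IH2 [] h2; constructor; tauto.
Qed.

Lemma eval_atom v b s t : qf_eval v (atom b s t) = atom_rel b (teval v s) (teval v t).
Proof. by case: b. Qed.

Lemma eval_fbool v B : qf_eval v (fbool B) = B.
Proof. by case: B. Qed.

Lemma fv_atom b s t : fv (atom b s t) = tvars s ++ tvars t.
Proof. by case: b. Qed.

Lemma fv_fbool B : fv (fbool B) = [::].
Proof. by case: B. Qed.

Lemma qf_fbool B : qf (fbool B).
Proof. by case: B. Qed.

Lemma eval_atom_upd_notin v x y b s t :
  x \notin tvars s ++ tvars t -> qf_eval (upd v x y) (atom b s t) = qf_eval v (atom b s t).
Proof. by rewrite mem_cat negb_or => /andP[hs ht]; rewrite !eval_atom !teval_upd_notin. Qed.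

Fixpoint map_atoms (g : bool -> term -> term -> formula) (f : formula) : formula :=
  match f with
  | FEq s t => g false s t
  | FLt s t => g true s t
  | FTrue => FTrue
  | FFalse => FFalse
  | FNot f1 => FNot (map_atoms g f1)
  | FAnd f1 f2 => FAnd (map_atoms g f1) (map_atoms g f2)
  | FOr f1 f2 => FOr (map_atoms g f1) (map_atoms g f2)
  | FImp f1 f2 => FImp (map_atoms g f1) (map_atoms g f2)
  | FEx _ _ | FAll _ _ => FFalse
  end.

Fixpoint atoms (f : formula) : seq (bool * term * term) :=
  match f with
  | FEq s t => [:: (false, s, t)]
  | FLt s t => [:: (true, s, t)]
  | FNot f1 => atoms f1
  | FAnd f1 f2 | FOr f1 f2 | FImp f1 f2 => atoms f1 ++ atoms f2
  | _ => [::]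
  end.

Lemma qf_map_atoms g f : (forall b s t, qf (g b s t)) -> qf (map_atoms g f).
Proof. by move=> qg; elim: f => //= [f1 -> f2 ->|f1 -> f2 ->|f1 -> f2 ->]. Qed.

Lemma eval_map_atoms v w g f :
  (forall b s t, (b, s, t) \in atoms f -> qf_eval v (g b s t) = qf_eval w (atom b s t)) ->
  qf_eval v (map_atoms g f) = qf_eval w f.
Proof.
elim: f => [s t|s t| | |f1 IH1|f1 IH1 f2 IH2|f1 IH1 f2 IH2|f1 IH1 f2 IH2|? ? ?|? ? ?]
  //= hg; try by apply: hg; rewrite inE.
  by rewrite IH1.
all: by rewrite IH1 ?IH2 // => b s t hbst; apply: hg; rewrite mem_cat hbst ?orbT.
Qed.

Lemma fv_map_atoms g f (S : seq nat) :
  (forall b s t, (b, s, t) \in atoms f -> {subset fv (g b s t) <= S}) ->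
  {subset fv (map_atoms g f) <= S}.
Proof.
elim: f => [s t|s t| | |f1 IH1|f1 IH1 f2 IH2|f1 IH1 f2 IH2|f1 IH1 f2 IH2|? ? ?|? ? ?] /= hg //;
  try by apply: hg; rewrite inE.
  exact: IH1.
all: move=> n; rewrite mem_cat => /orP[]; [apply: IH1 | apply: IH2] => b s t hbst;
  by apply: hg; rewrite mem_cat hbst ?orbT.
Qed.

Lemma mem_atoms_fv f b s t : (b, s, t) \in atoms f -> {subset tvars s ++ tvars t <= fv f}.
Proof.
elim: f => [s' t'|s' t'| | |f1 IH1|f1 IH1 f2 IH2|f1 IH1 f2 IH2|f1 IH1 f2 IH2|? ? ?|? ? ?] /=;
  rewrite ?in_nil //; try by rewrite inE => /eqP [_ <- <-].
all: by rewrite mem_cat => /orP[/IH1|/IH2] h n /h; rewrite mem_cat => ->; rewrite ?orbT.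
Qed.

Definition any_of (g : term -> formula) (cs : seq term) : formula :=
  foldr (fun c acc => FOr (g c) acc) FFalse cs.

Lemma eval_any_of v g cs : qf_eval v (any_of g cs) = has (fun c => qf_eval v (g c)) cs.
Proof. by elim: cs => //= c cs ->. Qed.

Lemma qf_any_of g cs : (forall c, qf (g c)) -> qf (any_of g cs).
Proof. by move=> qg; elim: cs => //= c cs ->; rewrite qg. Qed.

Lemma fv_any_of g cs (S : seq nat) : {in cs, forall c, {subset fv (g c) <= S}} ->
  {subset fv (any_of g cs) <= S}.
Proof.
elim: cs => //= c cs IH gS n; rewrite mem_cat => /orP[/gS -> //|]; first exact: mem_head.
by apply: IH => d dcs; apply: gS; rewrite inE dcs orbT.
Qed.

Section RealField.
Variable R : realFieldType.
Implicit Types (b : bool) (a r u y : R).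

Lemma atom_rel_minus_inf b a r y : (a != 0 -> y < a^-1 * r) ->
  atom_rel b (a * y) r = if a == 0 then atom_rel b 0 r else b && (0 < a).
Proof.
have [->|a0] := eqVneq a 0; first by rewrite mul0r.
move=> /(_ isT); set c := a^-1 * r => yc.
have -> : r = a * c by rewrite /c mulrA divff ?mul1r.
case: b => /=.
  have [ap|an] := ltP 0 a; first by rewrite ltr_pM2l.
  have an' : a < 0 by rewrite lt_neqAle a0 an.
  by rewrite ltr_nM2l // ltNge (ltW yc).
by apply: contraTF yc => /eqP /(mulfI a0) ->; rewrite ltxx.
Qed.

Lemma atom_rel_just_above b a r u y : u < y ->
  (a != 0 -> (a^-1 * r <= u) || (y < a^-1 * r)) ->
  atom_rel b (a * y) r =
  if b then (a * u < r) || (a < 0) && (a * u == r) else (a == 0) && (a * u == r).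
Proof.
move=> uy; have [->|a0] := eqVneq a 0.
  by rewrite !mul0r ltxx; case: b => /=; rewrite ?orbF ?eqxx.
move=> /(_ isT); set c := a^-1 * r => gap.
have -> : r = a * c by rewrite /c mulrA divff ?mul1r.
case: b => /=.
  have [ap|an] := ltP 0 a.
    rewrite !ltr_pM2l // (lt_gtF ap) orbF.
    by case/orP: gap => h; apply/idP/idP => h'; lra.
  have an' : a < 0 by rewrite lt_neqAle a0 an.
  rewrite !ltr_nM2l // an' (can_eq (mulKf a0)) eq_sym orbC -le_eqVlt.
  by case/orP: gap => h; apply/idP/idP => h'; lra.
apply: contraTF gap => /eqP /(mulfI a0) <-.
by rewrite ltxx orbF -ltNge.
Qed.

Implicit Types (s : seq R).

Lemma exists_lt_all s : exists y, all (fun q => y < q) s.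
Proof.
elim: s => [|p s [y hy]]; first by exists 0.
have [yp|py] := ltP y p; first by exists y; rewrite /= yp.
exists (p - 1); rewrite /= ltrBlDr ltrDl ltr01 /=.
by apply: sub_all hy => q /= yq; lra.
Qed.

Lemma exists_gt_gap (b : R) s :
  exists2 y, b < y & all (fun q => (q <= b) || (y < q)) s.
Proof.
elim: s => [|p s [y lt_by hy]]; first by exists (b + 1); rewrite ?ltrDl.
have [pb|bp] := leP p b; first by exists y; rewrite //= pb.
have [yp|py] := ltP y p; first by exists y; rewrite //= yp orbT.
exists ((b + p) / 2); first lra.
rewrite /=; apply/andP; split; first by apply/orP; right; lra.
by apply: sub_all hy => q /= /orP[->//|yq]; apply/orP; right; lra.
Qed.

Lemma last_le_or_all_gt y s :
  all (fun q => y < q) s \/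
  exists2 p, p \in s & (p <= y) && all (fun q => (q <= p) || (y < q)) s.
Proof.
elim: s => [|p s [hall|[p' hp' /andP[p'y hq]]]]; first by left.
- have [py|yp] := leP p y; last by left; rewrite /= yp.
  right; exists p; rewrite ?mem_head //= py lexx /=.
  by apply: sub_all hall => q /= ->; rewrite orbT.
- have [py|yp] := leP p y; last first.
    by right; exists p'; rewrite ?inE ?hp' ?orbT //= p'y yp orbT.
  have [pp'|p'p] := leP p p'.
    by right; exists p'; rewrite ?inE ?hp' ?orbT //= p'y pp'.
  right; exists p; rewrite ?mem_head //= py lexx /=.
  by apply: sub_all hq => q /= /orP[qp'|->]; rewrite ?orbT // (le_trans qp' (ltW p'p)).
Qed.

End RealField.

Variant testpoint := MinusInf | At of term | JustAbove of term.

Definition point_vars p : seq nat :=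
  match p with MinusInf => [::] | At u | JustAbove u => tvars u end.

(* [JustAbove u] stands for u + eps with eps > 0 infinitesimal, so that
   a (u + eps) < r iff a u < r, or a u = r and a < 0. *)
Definition subst_isolated p b a r : formula :=
  match p with
  | MinusInf => if a == 0 then atom b tzero r else fbool (b && (0 < a))
  | At u => atom b (TScale a u) r
  | JustAbove u =>
    if b then FOr (FLt (TScale a u) r) (FAnd (fbool (a < 0)) (FEq (TScale a u) r))
    else FAnd (fbool (a == 0)) (FEq (TScale a u) r)
  end.

Definition subst_atom x p b s t : formula :=
  if isolate x s t is Some (a, r) then subst_isolated p b a r else atom b s t.

Definition subst_point x p f := map_atoms (subst_atom x p) f.

Definition atom_breakpoints x s t : seq term :=
  if isolate x s t is Some (a, r) then (if a == 0 then [::] else [:: TScale a^-1 r])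
  else [::].

Lemma eval_subst_atom_At v x u b s t :
  qf_eval v (subst_atom x (At u) b s t) = qf_eval (upd v x (teval v u)) (atom b s t).
Proof.
rewrite /subst_atom; case: isolateP => [hx|a r _ _ e]; first by rewrite eval_atom_upd_notin.
by rewrite !eval_atom /=; apply: atom_relB; rewrite e.
Qed.

Lemma eval_subst_atom_JustAbove v x u y b s t : teval v u < y ->
  all (fun c => (teval v c <= teval v u) || (y < teval v c)) (atom_breakpoints x s t) ->
  qf_eval v (subst_atom x (JustAbove u) b s t) = qf_eval (upd v x y) (atom b s t).
Proof.
rewrite /subst_atom /atom_breakpoints; case: isolateP => [hx|a r _ _ e] uy gap.
  by rewrite eval_atom_upd_notin.
rewrite eval_atom (atom_relB b (e v y)) (atom_rel_just_above b uy).
  by case: b => /=; rewrite eval_fbool.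
by move=> a0; move: gap; rewrite (negbTE a0) /= andbT.
Qed.

Lemma eval_subst_atom_MinusInf v x y b s t :
  all (fun c => y < teval v c) (atom_breakpoints x s t) ->
  qf_eval v (subst_atom x MinusInf b s t) = qf_eval (upd v x y) (atom b s t).
Proof.
rewrite /subst_atom /atom_breakpoints; case: isolateP => [hx|a r _ _ e] gap.
  by rewrite eval_atom_upd_notin.
rewrite eval_atom (atom_relB b (e v y)) atom_rel_minus_inf.
  by rewrite /subst_isolated; case: (a == 0); rewrite ?eval_atom ?eval_fbool //= mul0r.
by move=> a0; move: gap; rewrite (negbTE a0) /= andbT.
Qed.

Definition breakpoints x f : seq term :=
  flatten [seq let: (_, s, t) := a in atom_breakpoints x s t | a <- atoms f].

Lemma all_breakpoints (P : pred term) x f b s t : all P (breakpoints x f) ->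
  (b, s, t) \in atoms f -> all P (atom_breakpoints x s t).
Proof.
by move=> /allP hP hbst; apply/allP => c hc; apply: hP; apply/flatten_mapP; exists (b, s, t).
Qed.

Lemma eval_subst_At v x u f :
  qf_eval v (subst_point x (At u) f) = qf_eval (upd v x (teval v u)) f.
Proof. by apply: eval_map_atoms => b s t _; apply: eval_subst_atom_At. Qed.

Lemma eval_subst_JustAbove v x u y f : teval v u < y ->
  all (fun c => (teval v c <= teval v u) || (y < teval v c)) (breakpoints x f) ->
  qf_eval v (subst_point x (JustAbove u) f) = qf_eval (upd v x y) f.
Proof.
move=> uy gap; apply: eval_map_atoms => b s t hbst.
by apply: eval_subst_atom_JustAbove uy _; apply: all_breakpoints gap hbst.
Qed.

Lemma eval_subst_MinusInf v x y f : all (fun c => y < teval v c) (breakpoints x f) ->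
  qf_eval v (subst_point x MinusInf f) = qf_eval (upd v x y) f.
Proof.
move=> below; apply: eval_map_atoms => b s t hbst.
by apply: eval_subst_atom_MinusInf; apply: all_breakpoints below hbst.
Qed.

Lemma fv_subst_isolated p b a r :
  {subset fv (subst_isolated p b a r) <= point_vars p ++ tvars r}.
Proof.
move=> n; case: p => [|u|u] /=; case: b; do ?case: ifP => _;
  rewrite /= ?fv_atom ?fv_fbool ?mem_cat ?in_nil //=;
  by case: (n \in tvars u); case: (n \in tvars r).
Qed.

Section FreeVariables.
Variables (x : nat) (S : seq nat).

Lemma fv_subst_atom p b s t :
  {subset tvars s ++ tvars t <= x :: S} -> {subset point_vars p <= S} ->
  {subset fv (subst_atom x p b s t) <= S}.
Proof.
rewrite /subst_atom; case: isolateP => [xst|a r xr rst _] stS pS.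
  by rewrite fv_atom; apply: subset_notin_cons xst stS.
have rS : {subset tvars r <= S}.
  by apply: subset_notin_cons xr _ => n /rst /stS.
by move=> n /fv_subst_isolated; rewrite mem_cat => /orP[/pS|/rS].
Qed.

Lemma fv_subst_point p f : {subset fv f <= x :: S} -> {subset point_vars p <= S} ->
  {subset fv (subst_point x p f) <= S}.
Proof.
move=> fS pS; apply: fv_map_atoms => b s t hbst.
by apply: fv_subst_atom pS => n /(mem_atoms_fv hbst) /fS.
Qed.

Lemma fv_breakpoints f c : {subset fv f <= x :: S} -> c \in breakpoints x f ->
  {subset tvars c <= S}.
Proof.
move=> fS /flatten_mapP [[[b s] t] hbst]; rewrite /atom_breakpoints.
case: isolateP => // a r xr rst _; case: eqP => // _; rewrite inE => /eqP -> /=.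
by apply: subset_notin_cons xr _ => n /rst /(mem_atoms_fv hbst) /fS.
Qed.

End FreeVariables.

Definition elim_ex x f : formula :=
  FOr (subst_point x MinusInf f)
      (any_of (fun c => FOr (subst_point x (At c) f) (subst_point x (JustAbove c) f))
              (breakpoints x f)).

Lemma qf_subst_point x p f : qf (subst_point x p f).
Proof.
apply: qf_map_atoms => b s t; rewrite /subst_atom.
case: isolate => [[a r]|]; last by case: b.
by case: p => *; case: b; rewrite /= ?qf_fbool //; case: ifP; rewrite ?qf_fbool.
Qed.

Lemma qf_elim_ex x f : qf (elim_ex x f).
Proof. by rewrite /= qf_subst_point qf_any_of // => c; rewrite /= !qf_subst_point. Qed.

Lemma fv_elim_ex x f : {subset fv (elim_ex x f) <= fv (FEx x f)}.
Proof.
have fS : {subset fv f <= x :: fv (FEx x f)}.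
  by move=> n nf; rewrite inE /= mem_filter nf andbT; case: eqP.
move=> n /=; rewrite mem_cat => /orP[]; first exact: fv_subst_point.
apply: fv_any_of => c /(fv_breakpoints fS) cS m /=.
by rewrite mem_cat => /orP[]; apply: fv_subst_point.
Qed.

Lemma eval_elim_ex v x f :
  (exists y, qf_eval (upd v x y) f) <-> qf_eval v (elim_ex x f).
Proof.
rewrite /= eval_any_of; set bs := breakpoints x f; split.
- case=> y fy.
  case: (last_le_or_all_gt y [seq teval v c | c <- bs]) => [|[p /mapP [c cbs ->]]];
    rewrite all_map => hy; first by rewrite (eval_subst_MinusInf hy) fy.
  case/andP: hy => cy gap; apply/orP; right; apply/hasP; exists c => //=.
  have [ceq|cy'] := eqVneq (teval v c) y; first by rewrite eval_subst_At ceq fy.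
  by rewrite (eval_subst_JustAbove _ gap) ?fy ?orbT // lt_neqAle cy' cy.
- case/orP => [fm|/hasP [c cbs /orP[fc|fc]]].
  + have [y hy] := exists_lt_all [seq teval v c | c <- bs].
    by rewrite all_map in hy; exists y; rewrite -(eval_subst_MinusInf hy).
  + by exists (teval v c); rewrite -eval_subst_At.
  + have [y cy gap] := exists_gt_gap (teval v c) [seq teval v c | c <- bs].
    by rewrite all_map in gap; exists y; rewrite -(eval_subst_JustAbove cy gap).
Qed.

Lemma holds_elim_ex v x f : qf f -> holds v (FEx x f) <-> holds v (elim_ex x f).
Proof.
move=> qf_f; rewrite (rwP (qf_evalP v (qf_elim_ex x f))) -eval_elim_ex.
by split=> -[y /(qf_evalP _ qf_f) fy]; exists y.
Qed.

Theorem lemma1 (phi : formula) (x : nat) :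
  qf phi ->
  exists psi : formula,
    [/\ qf psi,
        {subset fv psi <= fv (FEx x phi)} &
        forall v : nat -> rat, holds v (FEx x phi) <-> holds v psi].
Proof.
move=> qf_phi; exists (elim_ex x phi).
by split=> [|n /fv_elim_ex|v]; [exact: qf_elim_ex | | exact: holds_elim_ex].
Qed.
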